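(* Let $\mathbb{K}\in\{\mathbb{R},\mathbb{C}\}$ and let $X$ be an infinite-dimensional normed vector space over $\mathbb{K}$. Suppose $o(X)=|X|=\dim X$. Then there exists a family $\mathcal{B}$ of (Hamel) bases of $X$ such that $|\mathcal{B}|=2^{|X|}$ and every element of $\mathcal{B}$ is a connected, locally connected and dense subset of $X$.
   Context: $|S|$ denotes the cardinality of a set $S$. $\dim X$ denotes the algebraic (Hamel) dimension of $X$, i.e. the cardinality of an algebraic basis of $X$ over $\mathbb{K}$. $o(X)$ denotes the cardinality of the family of all open subsets of $X$ (with respect to the norm topology). A basis always means an algebraic (Hamel) basis; topological notions refer to the norm topology and induced subspace topologies. *)

From HB Require Import structures.
From mathcomp Require Import all_boot all_order all_algebra.
From mathcomp Require Import all_classical all_reals all_analysis.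
From mathcomp Require Import complex.
Set Implicit Arguments. Unset Strict Implicit. Unset Printing Implicit Defensive.
Import Order.TTheory GRing.Theory Num.Theory.
Import numFieldNormedType.Exports.
Local Open Scope classical_set_scope.
Local Open Scope ring_scope.
Local Open Scope card_scope.

Section Hamel.
Variables (K : numFieldType) (X : lmodType K).

Definition lincomb (s : seq X) (c : nat -> K) : X :=
  \sum_(i < size s) c i *: s`_i.

Definition lin_indep (B : set X) : Prop :=
  forall (s : seq X) (c : nat -> K),
    uniq s -> (forall x, x \in s -> B x) -> lincomb s c = 0 ->
    forall i, (i < size s)%N -> c i = 0.

Definition spans (B : set X) : Prop :=
  forall x : X, exists (s : seq X) (c : nat -> K),
    (forall y, y \in s -> B y) /\ x = lincomb s c.

Definition hamel_basis (B : set X) : Prop := lin_indep B /\ spans B.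

Definition infinite_dimensional : Prop :=
  forall s : seq X, ~ spans [set x | x \in s].
End Hamel.

Definition locally_connected_set (T : topologicalType) (A : set T) : Prop :=
  forall x, A x -> forall U : set T, open U -> U x ->
    exists V : set T, [/\ open V, V x, V `&` A `<=` U & connected (V `&` A)].

Definition theorem2_claim (K : numFieldType) : Prop :=
  forall X : normedModType K,
    infinite_dimensional X ->
    (* o(X) = |X| *)
    [set U : set X | open U] #= [set: X] ->
    (exists B : set X, hamel_basis B /\ B #= [set: X]) ->
    exists F : set (set X),
      F #= [set: set X] /\
      (forall B, F B ->
         [/\ hamel_basis B, connected B, locally_connected_set B & dense B]).

From HB Require Import structures.
From mathcomp Require Import all_boot all_order all_algebra.
From mathcomp Require Import all_classical all_reals all_analysis.
From mathcomp Require Import complex.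
Set Implicit Arguments. Unset Strict Implicit. Unset Printing Implicit Defensive.
Import Order.TTheory GRing.Theory Num.Theory.
Import numFieldNormedType.Exports.
Local Open Scope classical_set_scope.
Local Open Scope ring_scope.
Local Open Scope card_scope.

(* A set T of vectors is large when every linear span containing T has codimension
   at most one.  If D is closed and convex, and two disjoint open sets P, Q meet D,
   P at an interior point of D, then D minus P and Q is a large closed set: the
   segments from points near a point of P to a point of Q must leave P and Q.
   Hence a set meeting every large closed set is dense, connected and locally connected.
   Since dim X = |X|, a large set never lies in the span of a proper initial segment of a
   suitable well-ordered index set of size |X|, so transfinite recursion picks a linearly
   independent family containing a vector q_C in each large closed set C (there are at
   most o(X) = |X| of them) and a further vector q_x for each x in X.  Replacing q_x by
   -q_x exactly when x is not in A keeps the family independent; extending it to a Hamel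
   basis B_A gives 2^|X| distinct bases, each meeting every large closed set. *)

Lemma card_le_inj_in T U (A : set T) (B : set U) (f : T -> U) :
  {in A &, injective f} -> (forall x, A x -> B (f x)) -> A #<= B.
Proof.
move=> fi fAB; rewrite -(card_le_eql (inj_card_eq fi)).
by apply: subset_card_le => _ [x Ax <-]; apply: fAB.
Qed.

Lemma seq_max (T : eqType) (P : T -> Prop) (r : T -> T -> Prop) (s : seq T) :
  (forall x y, P x -> P y -> x <> y -> r x y \/ r y x) ->
  (forall x y z, r x y -> r y z -> r x z) ->
  (forall x, x \in s -> P x) -> s != [::] ->
  exists2 m, m \in s & forall z, z \in s -> z = m \/ r z m.
Proof.
move=> tot tr; elim: s => [//|x [|x' s] IH] sP _.
  by exists x => [|z]; rewrite ?inE // => /eqP ->; left.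
have [|//|m ms Hm] := IH; first by move=> z zs; apply: sP; rewrite inE zs orbT.
have Px : P x by apply: sP; rewrite mem_head.
have Pm : P m by apply: sP; rewrite inE ms orbT.
have [->|xm] := eqVneq x m.
  by exists m => [|z]; rewrite ?mem_head // inE => /orP[/eqP->|/Hm]; [left|].
have [rxm|rmx] := tot x m Px Pm (elimN eqP xm).
  exists m => [|z]; first by rewrite inE ms orbT.
  by rewrite inE => /orP[/eqP->|/Hm]; [right|].
exists x => [|z]; first by rewrite mem_head.
rewrite inE => /orP[/eqP->|/Hm[->|rzm]]; [left|right|right; exact: tr rmx] => //.
Qed.

Lemma card_le_fun T U (A : set T) (B : set U) x0 : A x0 -> A #<= B ->
  exists2 f : T -> U, (forall x, A x -> B (f x)) & {in A &, injective f}.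
Proof.
move=> Ax0 /card_leP [F].
have Finj : injective F by move=> a b; apply: (@inj _ _ [set: A] F); rewrite inE.
pose f x := if pselect (A x) is left Ax then sval (F (exist _ x (mem_set Ax)))
  else sval (F (exist _ x0 (mem_set Ax0))).
exists f => [x Ax|x y /set_mem Ax /set_mem Ay]; rewrite /f.
  by case: pselect => // Ax'; apply/set_mem/(svalP (F _)).
by case: pselect => // Ax'; case: pselect => // Ay' /val_inj /Finj [].
Qed.

(* Cardinals are compared up to a countable factor, as in [A #<= B `*` [set: nat]],
   which avoids the arithmetic of infinite cardinals. *)
Lemma card_le_setXnat T (A : set T) : A #<= A `*` [set: nat].
Proof. by apply: (@card_le_inj_in _ _ _ _ (fun x => (x, 0%N))) => [x y _ _ []|]. Qed.

Lemma card_le_setXnat_trans T U V (A : set T) (B : set U) (C : set V) :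
  A #<= B `*` [set: nat] -> B #<= C `*` [set: nat] -> A #<= C `*` [set: nat].
Proof.
move=> AB BC; have [->|/set0P[a0 Aa0]] := eqVneq A set0; first exact: card_ge0.
have [f fAB finj] := card_le_fun Aa0 AB; have [Bb0 _] := fAB a0 Aa0.
have [g gBC ginj] := card_le_fun Bb0 BC.
pose h a := ((g (f a).1).1, pickle ((g (f a).1).2, (f a).2)).
apply: (@card_le_inj_in _ _ _ _ h) => [a a' Aa Aa' [e1 /(pcan_inj pickleK) [e2 e3]]|a Aa].
  have [Bfa _] := fAB a (set_mem Aa); have [Bfa' _] := fAB a' (set_mem Aa').
  apply: finj => //; rewrite [f a]surjective_pairing [f a']surjective_pairing e3.
  congr pair; apply: ginj; rewrite ?inE //.
  by rewrite [g _]surjective_pairing [g (f a').1]surjective_pairing e1 e2.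
by have [Bfa _] := fAB a Aa; have [] := gBC _ Bfa.
Qed.

Lemma card_le_setU1Xnat T (B : set T) b c : B b -> B `|` [set c] #<= B `*` [set: nat].
Proof.
move=> Bb; pose f y := if pselect (y = c) then (b, 1%N) else (y, 0%N).
apply: (@card_le_inj_in _ _ _ _ f) => [y y' _ _|y]; rewrite /f.
  case: pselect => yc; case: pselect => y'c //=; first by rewrite yc y'c.
  by case.
by case: pselect => [//|yc [//|/= /yc]].
Qed.

Lemma exists_strict_well_order (T : eqType) : exists lt : T -> T -> Prop,
  [/\ well_founded lt, forall x y z, lt x y -> lt y z -> lt x z &
      forall x y, x <> y -> lt x y \/ lt y x].
Proof.
have [R Rwo] := wochoice.well_ordering_principle T.
have Rch : wochoice.wo_chain R predT by move=> A _; apply: Rwo.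
have Ranti x y : R x y -> R y x -> x = y.
  by move=> xy yx; apply: (wochoice.wo_chain_antisymmetric Rch); rewrite ?inE ?xy ?yx.
have Rmin (A : set T) : A !=set0 -> exists2 m, A m & forall x, A x -> R m x.
  move=> [x Ax]; have [|m [[mA mmin] _]] := Rwo [pred y | `[< A y >]].
    by exists x; rewrite unfold_in; apply/asboolP.
  exists m => [|y Ay]; first by move: mA; rewrite unfold_in => /asboolP.
  by apply: mmin; rewrite unfold_in; apply/asboolP.
exists (fun x y => R x y /\ x <> y); split.
- move=> x; apply: contrapT => nx.
  have [m nm mmin] := Rmin [set a | ~ Acc (fun x y => R x y /\ x <> y) a] (ex_intro _ x nx).
  apply: nm; constructor => y [Rym ym]; apply: contrapT => ny.
  by apply: ym; apply: Ranti => //; apply: mmin.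
- move=> x y z [Rxy xy] [Ryz yz].
  have [|m m3 mmin] := Rmin [set w | w = x \/ w = y \/ w = z]; first by exists x; left.
  have [Rmx Rmy Rmz] : [/\ R m x, R m y & R m z].
    by split; apply: mmin; [left|right; left|right; right].
  split; last by move=> xz; apply: xy; apply: Ranti; rewrite // xz.
  by case: m3 => [|[|]] em; subst m => //; [case: xy|case: yz]; apply: Ranti.
- move=> x y xy; have /orP[R'|R'] : R x y || R y x by apply: (wochoice.wo_chainW Rch).
  + by left.
  + by right; split => // /esym.
Qed.

Lemma wf_minimal T (lt : T -> T -> Prop) (P : set T) : well_founded lt ->
  P !=set0 -> exists2 m, P m & forall y, lt y m -> ~ P y.
Proof.
move=> wf [x Px]; apply: contrapT => nomin.
elim/(well_founded_ind wf): x Px => x IH Px.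
by apply: nomin; exists x => // y /IH.
Qed.

Lemma exists_least_segment T (lt : T -> T -> Prop) (P : set T -> Prop) :
  well_founded lt -> P setT -> exists D, P D /\ forall b, D b -> ~ P [set y | lt y b].
Proof.
move=> wf PT; have [[a Pa]|none] := pselect (exists a, P [set y | lt y a]).
  have [m Pm mmin] := @wf_minimal _ _ (fun a => P [set y | lt y a]) wf (ex_intro _ a Pa).
  by exists [set y | lt y m]; split => // b /mmin.
by exists setT; split => // b _ Pb; apply: none; exists b.
Qed.

Section Lexicographic.
Variables (T : Type) (lt : T -> T -> Prop).

Definition lexn (i j : T * nat) := lt i.1 j.1 \/ i.1 = j.1 /\ (i.2 < j.2)%N.

Lemma lexn_wf : well_founded lt -> well_founded lexn.
Proof.
move=> wf [b n]; elim/(well_founded_ind wf): b n => b IHb n.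
elim/ltn_ind: n => n IHn; constructor => -[b' n'] [/= lb|/= [-> ln]]; first exact: IHb.
exact: IHn.
Qed.

Lemma lexn_trans : (forall x y z, lt x y -> lt y z -> lt x z) ->
  forall i j k, lexn i j -> lexn j k -> lexn i k.
Proof.
move=> tr [b1 n1] [b2 n2] [b3 n3]; rewrite /lexn /=.
move=> [l12|[-> l12]] [l23|[<- l23]]; [left; exact: tr l23|left|left|] => //.
by right; split; [|exact: ltn_trans l23].
Qed.

Lemma lexn_total : (forall x y, x <> y -> lt x y \/ lt y x) ->
  forall i j, i <> j -> lexn i j \/ lexn j i.
Proof.
move=> tot [b n] [b' n']; rewrite /lexn /=.
have [<-|/tot[bb' _|bb' _]] := pselect (b = b'); [|by left; left|by right; left].
case: (ltngtP n n') => [nn' _|nn' _|-> []//]; [by left; right|by right; right].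
Qed.

End Lexicographic.

Lemma wf_choice (I : Type) (V : choiceType) (lt : I -> I -> Prop)
    (P : I -> (I -> V) -> V -> Prop) (v0 : V) : well_founded lt ->
  (forall j f g x, (forall i, lt i j -> f i = g i) -> P j f x -> P j g x) ->
  (forall j f, exists x, P j f x) -> exists q : I -> V, forall j, P j q (q j).
Proof.
move=> wf Pext Pex.
pose ext j (rec : forall i, lt i j -> V) i :=
  if pselect (lt i j) is left h then rec i h else v0.
pose F j rec := xget v0 [set x | P j (ext j rec) x].
pose q := Fix wf (fun _ => V) F.
have qE j : q j = F j (fun i _ => q i).
  rewrite /q Fix_eq // => j' f g fg; rewrite /F.
  suff -> : ext j' f = ext j' g by [].
  by apply/funext => i; rewrite /ext; case: pselect.
exists q => j; rewrite qE; apply: Pext (xgetPex v0 (Pex j _)) => i ij.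
by rewrite /ext; case: pselect.
Qed.

Section LinearSpan.
Variables (K : numFieldType) (X : lmodType K).
Implicit Types (G B E U : set X) (s u : seq X).

Definition lin_span G : set X := [set x | exists s, [/\ uniq s,
  forall y, y \in s -> G y & exists f : X -> K, x = \sum_(y <- s) f y *: y]].

Definition free_set B := forall s (f : X -> K), uniq s -> (forall y, y \in s -> B y) ->
  \sum_(y <- s) f y *: y = 0 -> forall y, y \in s -> f y = 0.

Lemma big_uniq_sub s u (F : X -> X) : uniq s -> uniq u -> {subset s <= u} ->
  \sum_(y <- s) F y = \sum_(y <- u) (if y \in s then F y else 0).
Proof.
move=> us uu su; rewrite -big_mkcond /= -(big_filter u); apply: perm_big.
apply: uniq_perm => //; first exact: filter_uniq.
by move=> y; rewrite mem_filter; case ys: (y \in s) => //=; rewrite su.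
Qed.

Lemma lin_span0 G : lin_span G 0.
Proof. by exists [::]; split => //; exists (fun=> 0); rewrite big_nil. Qed.

Lemma sub_lin_span G : G `<=` lin_span G.
Proof.
move=> y Gy; exists [:: y]; split => // [z|]; first by rewrite inE => /eqP->.
by exists (fun=> 1); rewrite big_seq1 scale1r.
Qed.

Lemma lin_spanZ G a x : lin_span G x -> lin_span G (a *: x).
Proof.
move=> [s [us sG [f ->]]]; exists s; split => //; exists (fun y => a * f y).
by rewrite scaler_sumr; apply: eq_bigr => y _; rewrite scalerA.
Qed.

Lemma lin_spanD G x x' : lin_span G x -> lin_span G x' -> lin_span G (x + x').
Proof.
move=> [s [us sG [f ->]]] [s' [us' sG' [f' ->]]].
have ss : {subset s <= undup (s ++ s')} by move=> y ys; rewrite mem_undup mem_cat ys.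
have ss' : {subset s' <= undup (s ++ s')}.
  by move=> y ys; rewrite mem_undup mem_cat ys orbT.
exists (undup (s ++ s')); split; first exact: undup_uniq.
  by move=> y; rewrite mem_undup mem_cat => /orP[/sG|/sG'].
exists (fun y => (if y \in s then f y else 0) + (if y \in s' then f' y else 0)).
rewrite (big_uniq_sub _ us (undup_uniq _) ss) (big_uniq_sub _ us' (undup_uniq _) ss').
rewrite -big_split /=; apply: eq_bigr => y _; rewrite scalerDl.
by congr (_ + _); case: ifP => _; rewrite ?scale0r.
Qed.

Lemma lin_spanN G x : lin_span G x -> lin_span G (- x).
Proof. by move=> /(lin_spanZ (-1)); rewrite scaleN1r. Qed.

Lemma lin_span_sum G (I : Type) (r : seq I) (P : pred I) (F : I -> X) :
  (forall i, P i -> lin_span G (F i)) -> lin_span G (\sum_(i <- r | P i) F i).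
Proof. by move=> GF; apply: big_ind => //; [exact: lin_span0|exact: lin_spanD]. Qed.

Lemma lin_span_sub G G' : G `<=` lin_span G' -> lin_span G `<=` lin_span G'.
Proof.
move=> GG' x [s [us sG [f ->]]]; rewrite big_seq_cond; apply: lin_span_sum => y.
by rewrite andbT => /sG /GG' /lin_spanZ; apply.
Qed.

Lemma lin_span_mono G G' : G `<=` G' -> lin_span G `<=` lin_span G'.
Proof. by move=> GG'; apply: lin_span_sub => y /GG' /sub_lin_span. Qed.

Lemma lin_span_support G x : lin_span G x ->
  exists2 s : seq X, (forall y, y \in s -> G y) & lin_span [set y | y \in s] x.
Proof. by move=> [s [us sG fs]]; exists s => //; exists s. Qed.

Lemma spansP B : spans B <-> forall x, lin_span B x.
Proof.
split=> [Bspan x|Bspan x].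
  have [s [c [sB ->]]] := Bspan x; rewrite /lincomb.
  by apply: lin_span_sum => i _; apply/lin_spanZ/sub_lin_span/sB/mem_nth.
have [s [_ sB [f ->]]] := Bspan x; exists s, (fun i => f s`_i); split => //.
by rewrite /lincomb (big_nth 0) big_mkord.
Qed.

Lemma lin_indepP B : lin_indep B <-> free_set B.
Proof.
have sum_nth s (F : X -> X) : \sum_(y <- s) F y = \sum_(i < size s) F s`_i.
  by rewrite (big_nth 0) big_mkord.
split=> [Bfree s f us sB s0 y ys|Bfree s c us sB s0 i lti].
  have := Bfree s (fun i => f s`_i) us sB.
  rewrite /lincomb -(sum_nth s (fun y => f y *: y)) => /(_ s0)/(_ (index y s)).
  by rewrite index_mem nth_index //; apply.
have := Bfree s (fun y => c (index y s)) us sB.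
rewrite sum_nth (eq_bigr (fun i : 'I_(size s) => c i *: s`_i)) => [/(_ s0)|j _].
  by move=> /(_ s`_i (mem_nth _ lti)); rewrite index_uniq.
by rewrite index_uniq.
Qed.

Lemma lin_span_pivot G s (f : X -> K) x : uniq s -> x \in s -> f x != 0 ->
  \sum_(y <- s) f y *: y = 0 ->
  (forall y, y \in s -> y != x -> f y != 0 -> G y) -> lin_span G x.
Proof.
move=> us xs fx; rewrite (bigD1_seq x xs us) /= => /eqP; rewrite addr_eq0 => /eqP sx sG.
rewrite -[x](scalerK fx) sx; apply/lin_spanZ/lin_spanN.
rewrite big_seq_cond; apply: lin_span_sum => y /andP[ys yx].
have [->|fy] := eqVneq (f y) 0; first by rewrite scale0r; apply: lin_span0.
exact/lin_spanZ/sub_lin_span/sG.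
Qed.

Lemma free_set_notin_span E U e : free_set E -> U `<=` E -> E e -> ~ U e ->
  ~ lin_span U e.
Proof.
move=> Efree UE Ee nUe [s [us sU [f ef]]].
have es : e \notin s by apply/negP => /sU.
pose F y := if y == e then 1 else - f y.
have sumF : \sum_(y <- s) F y *: y = - e.
  rewrite ef -sumrN big_seq [RHS]big_seq; apply: eq_bigr => y ys.
  by rewrite /F ifF ?scaleNr //; apply: contraNF es => /eqP <-.
have : \sum_(y <- e :: s) F y *: y = 0 by rewrite big_cons sumF /F eqxx scale1r subrr.
have eEs y : y \in e :: s -> E y by rewrite inE => /orP[/eqP->|/sU/UE].
move=> /(Efree _ F); rewrite /= es us => /(_ isT eEs e (mem_head _ _)) /eqP.
by rewrite /F eqxx oner_eq0.
Qed.

Lemma free_card_le E G : free_set E -> G `<=` lin_span E -> E `<=` lin_span G ->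
  E #<= G `*` [set: nat].
Proof.
move=> Efree GE EG.
have /choice [supp suppP] : forall g, exists s : seq X, G g ->
    (forall y, y \in s -> E y) /\ lin_span [set y | y \in s] g.
  move=> g; have [/GE/lin_span_support [s sE gs]|nGg] := pselect (G g).
    by exists s.
  by exists [::] => /nGg.
pose U := [set y | exists2 g, G g & y \in supp g].
have UE : U `<=` E by move=> y [g /suppP[+ _]]; apply.
have GU : G `<=` lin_span U.
  move=> g Gg; have [_] := suppP g Gg; apply: lin_span_mono => y ys.
  by exists g.
(* [e] lies in the span of the supports, so freeness puts it in one of them. *)
have /choice [gen genP] : forall e, exists g, E e -> G g /\ e \in supp g.
  move=> e; have [Ee|nEe] := pselect (E e); last by exists e => /nEe.
  suff [g Gg eg] : U e by exists g.
  apply: contrapT => nUe.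
  exact: free_set_notin_span Efree UE Ee nUe (lin_span_sub GU (EG _ Ee)).
apply: (@card_le_inj_in _ _ _ _ (fun e => (gen e, index e (supp (gen e))))).
  move=> e e' /set_mem Ee /set_mem Ee' [ge ie].
  have [_ es] := genP e Ee; have [_ es'] := genP e' Ee'.
  by rewrite -(nth_index 0 es) -(nth_index 0 es') ie ge.
by move=> e Ee; split => //; have [] := genP e Ee.
Qed.

Lemma free_set_opp B y : free_set B -> B y -> B (- y) -> y = 0.
Proof.
move=> Bfree By Bny; apply: contrapT => /eqP y0.
have ny : y != - y.
  by rewrite -addr_eq0 -mulr2n -scaler_nat scaler_eq0 pnatr_eq0.
apply: (@free_set_notin_span B [set - y] y Bfree) => //.
- by move=> _ ->.
- by move/eqP; rewrite (negbTE ny).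
- by rewrite -[y]opprK; apply/lin_spanN/sub_lin_span; rewrite /= opprK.
Qed.

Lemma free_setU1 B x : free_set B -> ~ lin_span B x -> free_set (B `|` [set x]).
Proof.
move=> Bfree Bx s f us sB s0.
have [xs|xs] := boolP (x \in s); last first.
  apply: Bfree => // y ys; have [//|/= yx] := sB y ys.
  by move: ys; rewrite yx (negbTE xs).
have sxB y : y \in s -> y != x -> B y by move=> /sB[//|->]; rewrite eqxx.
have fx : f x = 0.
  apply: contrapT => /eqP fx; apply: Bx.
  by apply: (lin_span_pivot us xs fx s0) => y ys yx _; apply: sxB.
move: s0; rewrite (bigD1_seq x xs us) /= fx scale0r add0r -big_filter => s0 y ys.
have [->//|yx] := eqVneq y x.
apply: (Bfree _ f (filter_uniq _ us) _ s0); last by rewrite mem_filter yx.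
by move=> z; rewrite mem_filter => /andP[zx /sxB]; apply.
Qed.

Lemma chain_seq_cover (A : set X) (F : set (set X)) s :
  total_on F subset -> (forall y, y \in s -> (A `|` \bigcup_(C in F) C) y) ->
  (forall y, y \in s -> A y) \/ exists2 C, F C & forall y, y \in s -> (A `|` C) y.
Proof.
move=> Ftot; elim: s => [|y s IH] sAF; first by left.
have /IH [sA|[C FC sC]] : forall z, z \in s -> (A `|` \bigcup_(C in F) C) z.
  by move=> z zs; apply: sAF; rewrite inE zs orbT.
- have [Ay|[C FC Cy]] := sAF y (mem_head _ _).
    by left => z; rewrite inE => /orP[/eqP->|/sA].
  by right; exists C => // z; rewrite inE => /orP[/eqP->|/sA]; [right|left].
- have [Ay|[C' FC' C'y]] := sAF y (mem_head _ _).
    by right; exists C => // z; rewrite inE => /orP[/eqP->|/sC]; [left|].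
  have [CC'|C'C] := Ftot C C' FC FC'.
  + right; exists C' => // z; rewrite inE => /orP[/eqP->|/sC[]] => [|Az|Cz].
    * by right.
    * by left.
    * by right; apply: CC'.
  + by right; exists C => // z; rewrite inE => /orP[/eqP->|/sC]; [right; apply: C'C|].
Qed.

Lemma free_set_extend A : free_set A ->
  exists B, [/\ A `<=` B, free_set B & forall x, lin_span B x].
Proof.
move=> Afree.
have [|C [AC Cmax]] := @Zorn_bigcup X [set C | free_set (A `|` C)].
  move=> F FP Ftot s f us /(chain_seq_cover Ftot) [sA|[C FC sC]].
    exact: Afree.
  exact: FP C FC s f us sC.
exists (A `|` C); split => //.
move=> x; apply: contrapT => nx.
have Cx : ~ C x by move=> Cx; apply: nx; apply: sub_lin_span; right.
apply: (Cmax (C `|` [set x])); last by rewrite /= setUA; apply: free_setU1.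
by split=> [y Cy|sub]; [left|apply: Cx; apply: sub; right].
Qed.

Section Fresh.
Variables (I : Type) (J : set I) (lt : I -> I -> Prop).

Definition fresh (q : I -> X) :=
  forall j, J j -> ~ lin_span (q @` [set i | J i /\ lt i j]) (q j).

Lemma fresh_neq0 q j : fresh q -> J j -> q j != 0.
Proof.
by move=> qfresh Jj; apply/eqP => q0; apply: (qfresh j Jj); rewrite q0; apply: lin_span0.
Qed.

Lemma freshZ q (c : I -> K) : (forall j, J j -> c j != 0) -> fresh q ->
  fresh (fun j => c j *: q j).
Proof.
move=> c0 qfresh j Jj cq; apply: (qfresh j Jj).
rewrite -[q j](scalerK (c0 j Jj)); apply: lin_spanZ.
by apply: lin_span_sub cq => _ [i Ji <-]; apply/lin_spanZ/sub_lin_span; exists i.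
Qed.

Hypotheses (lt_trans : forall i j k, lt i j -> lt j k -> lt i k)
  (lt_total : forall i j, i <> j -> lt i j \/ lt j i).

Lemma fresh_free q : fresh q -> free_set (q @` J).
Proof.
move=> qfresh s f us sJ s0 y0 y0s; apply: contrapT => /eqP fy0.
have [i0 _ _] := sJ y0 y0s.
have /choice [idx idxP] : forall y, exists i, (q @` J) y -> J i /\ q i = y.
  move=> y; have [[i Ji <-]|ny] := pselect ((q @` J) y); first by exists i.
  by exists i0 => /ny.
pose l := [seq y <- s | f y != 0].
have y0l : y0 \in l by rewrite mem_filter y0s fy0.
have [||||m ml mmax] := @seq_max _ (q @` J) (fun y z => lt (idx y) (idx z)) l.
- move=> y z Py Pz yz; apply: lt_total => e; apply: yz.
  by rewrite -(idxP y Py).2 -(idxP z Pz).2 e.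
- by move=> ? ? ?; apply: lt_trans.
- by move=> y; rewrite mem_filter => /andP[_ /sJ].
- by apply: contraTneq y0l => ->.
move: ml; rewrite mem_filter => /andP[fm ms].
have [Jm qm] := idxP m (sJ m ms).
apply: (qfresh _ Jm); rewrite qm; apply: (lin_span_pivot us ms fm s0) => y ys ym fy.
have [Jy qy] := idxP y (sJ y ys); exists (idx y) => //; split => //.
have /mmax [ym'|//] : y \in l by rewrite mem_filter fy.
by rewrite ym' eqxx in ym.
Qed.

Lemma fresh_signed_bases (q : I -> X) (r : X -> I) : fresh q -> injective r ->
  (forall x, J (r x)) -> exists bas : set X -> set X,
  [/\ injective bas, forall A, free_set (bas A) /\ (forall x, lin_span (bas A) x) &
      forall A j, J j -> ~ range r j -> bas A (q j)].
Proof.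
move=> qfresh rinj Jr.
pose eps A j : K := if `[< exists2 x, r x = j & ~ A x >] then -1 else 1.
have /choice [bas basP] : forall A, exists B,
    [/\ (fun j => eps A j *: q j) @` J `<=` B, free_set B & forall x, lin_span B x].
  move=> A; apply: free_set_extend; apply: fresh_free.
  apply: freshZ => // j _.
  by rewrite /eps; case: ifP; rewrite ?oppr_eq0 oner_eq0.
have bas_q A j : J j -> (forall x, r x = j -> A x) -> bas A (q j).
  move=> Jj jA; have [sub _ _] := basP A.
  have eps1 : eps A j = 1 by rewrite /eps ifF //; apply/asboolP => -[x /jA].
  by have := sub _ (ex_intro2 _ _ j Jj erefl); rewrite /= eps1 scale1r.
have bas_Nq A x : ~ A x -> bas A (- q (r x)).
  move=> nAx; have [sub _ _] := basP A.
  have epsN1 : eps A (r x) = -1 by rewrite /eps ifT //; apply/asboolP; exists x.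
  by have := sub _ (ex_intro2 _ _ (r x) (Jr x) erefl); rewrite /= epsN1 scaleN1r.
have basA A x : bas A (q (r x)) <-> A x.
  split=> [bq|Ax]; last by apply: bas_q => // x' /rinj ->.
  apply: contrapT => nAx; have [_ bfree _] := basP A.
  have := fresh_neq0 qfresh (Jr x).
  by rewrite (free_set_opp bfree bq (bas_Nq A x nAx)) eqxx.
exists bas; split.
- move=> A A' eqA; apply/seteqP; split => x Ax; apply/basA.
    by rewrite -eqA; apply/basA.
  by rewrite eqA; apply/basA.
- by move=> A; have [_ ? ?] := basP A.
- by move=> A j Jj nr; apply: bas_q => // x rx; case: nr; exists x.
Qed.

End Fresh.
End LinearSpan.

Section LargeSets.
Variables (K : numFieldType) (X : lmodType K).
Implicit Types (T G : set X).

Definition large T :=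
  forall G, T `<=` lin_span G -> exists v, forall x, lin_span (G `|` [set v]) x.

Lemma large_mono T T' : T `<=` T' -> large T -> large T'.
Proof. by move=> TT' Tl G T'G; apply: Tl => x /TT' /T'G. Qed.

Lemma largeT : large [set: X].
Proof.
by move=> G XG; exists 0 => x; apply: lin_span_mono (XG x I) => y Gy; left.
Qed.

Section Transversal.
Variable E : set X.
Hypotheses (infdim : infinite_dimensional X) (Efree : free_set E)
  (Espan : forall x, lin_span E x) (XE : [set: X] #<= E).

Lemma large_not_sub_span_seq T (s : seq X) :
  large T -> ~ T `<=` lin_span [set y | y \in s].
Proof.
move=> Tl /Tl [v vspan]; apply: (infdim (s := v :: s)); apply/spansP => x.
by apply: lin_span_mono (vspan x) => y /= [ys|->]; rewrite /= inE ?ys ?orbT ?eqxx.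
Qed.

Lemma large_card T G : large T -> T `<=` lin_span G -> E #<= G `*` [set: nat].
Proof.
move=> Tl TG; have [G0|/set0P[g Gg]] := eqVneq G set0.
  exfalso; apply: (large_not_sub_span_seq (s := [::]) Tl).
  by apply: subset_trans TG _; rewrite G0; apply: lin_span_mono.
have [v vspan] := Tl G TG.
apply: card_le_setXnat_trans (card_le_setU1Xnat v Gg).
by apply: free_card_le Efree (fun x _ => Espan x) (fun e _ => vspan e).
Qed.

(* The predecessors of [(b, n)] lie in [([set y | lt y b] `|` [set b]) `*` [set: nat]]:
   finitely many if [b] is least, and otherwise too few to span a subspace of
   codimension at most one. *)
Lemma large_escapes_prefix_span (lt : X -> X -> Prop) T (f : X * nat -> X) b n :
  large T -> ~ ([set: X] #<= [set y | lt y b] `*` [set: nat]) ->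
  exists x, T x /\ ~ lin_span (f @` [set i | lexn lt i (b, n)]) x.
Proof.
move=> Tl small; apply: contrapT => noesc.
have Tsub : T `<=` lin_span (f @` [set i | lexn lt i (b, n)]).
  by move=> x Tx; apply: contrapT => nx; apply: noesc; exists x.
have [[c cb]|nolt] := pselect (exists c, lt c b); last first.
  apply: (large_not_sub_span_seq (s := map (fun k => f (b, k)) (iota 0 n)) Tl).
  apply: subset_trans Tsub _; apply: lin_span_mono => _ [[c m] [/= cb|/= [-> mn]] <-].
    by case: nolt; exists c.
  by apply/mapP; exists m; rewrite ?mem_iota.
have prefix_sub :
    [set i | lexn lt i (b, n)] `<=` ([set y | lt y b] `|` [set b]) `*` [set: nat].
  by move=> [d m] [/= db|/= [-> _]]; split => //; [left|right].
apply: small; apply: card_le_trans XE _.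
apply: card_le_setXnat_trans (large_card Tl Tsub) _.
apply: card_le_setXnat_trans (card_le_setU1Xnat b cb).
exact: card_le_trans (card_image_le _ _) (subset_card_le prefix_sub).
Qed.

Lemma exists_fresh_transversal : exists (J : set (X * nat))
    (lt : X * nat -> X * nat -> Prop) (code : X + X -> X * nat),
  [/\ forall i j k, lt i j -> lt j k -> lt i k, forall i j, i <> j -> lt i j \/ lt j i,
      injective code, forall z, J (code z) &
      forall T : X * nat -> set X, (forall j, J j -> large (T j)) ->
        exists2 q, fresh J lt q & forall j, J j -> T j (q j)].
Proof.
have [lt [wf tr tot]] := exists_strict_well_order X.
have [D [XD Dsmall]] := exists_least_segment
  (P := fun S => [set: X] #<= S `*` [set: nat]) wf (card_le_setXnat _).
have [psi psiD psiinj] := card_le_fun (x0 := 0) I XD.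
pose code (z : X + X) := match z with
  | inl x => ((psi x).1, (psi x).2.*2) | inr x => ((psi x).1, (psi x).2.*2.+1) end.
exists [set j | D j.1], (lexn lt), code; split.
- exact: lexn_trans.
- exact: lexn_total.
- have psi_eq x y : (psi x).1 = (psi y).1 -> (psi x).2 = (psi y).2 -> x = y.
    move=> e1 e2; apply: psiinj; rewrite ?inE //.
    by rewrite [psi x]surjective_pairing e1 e2 -surjective_pairing.
  case=> x [] y [e1 e2].
  + by rewrite (psi_eq x y e1 (double_inj e2)).
  + by move/(congr1 odd): e2; rewrite oddS !odd_double.
  + by move/(congr1 odd): e2; rewrite oddS !odd_double.
  + by rewrite (psi_eq x y e1 (double_inj e2)).
- by case=> x /=; case: (psiD x I).
move=> T Tl.
pose P j q x := [set j | D j.1] j ->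
  T j x /\ ~ lin_span (q @` [set i | D i.1 /\ lexn lt i j]) x.
have [||q qP] := @wf_choice _ X (lexn lt) P 0 (lexn_wf wf).
- move=> j f g x fg Pf Jj; have [Tx nx] := Pf Jj; split => //.
  by rewrite (@eq_imagel _ _ _ g f) // => i [_ ij]; rewrite fg.
- move=> [b n] f; have [/= Db|nD] := pselect (D b); last by exists 0 => /nD.
  have [x [Tx nx]] := large_escapes_prefix_span f n (Tl (b, n) Db) (Dsmall b Db).
  exists x => _; split => //; apply: contra_not nx.
  by apply: lin_span_mono => _ [i [_ ij] <-]; exists i.
- by exists q => [j Jj|j Jj]; [exact: (qP j Jj).2|exact: (qP j Jj).1].
Qed.

End Transversal.
End LargeSets.

Lemma exists_pos_le2 (K : numFieldType) (a b : K) : 0 < a -> 0 < b ->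
  exists c, [/\ 0 < c, c <= a & c <= b].
Proof.
move=> a0 b0; exists (a * b / (a + b)); split.
- by rewrite divr_gt0 ?mulr_gt0 ?addr_gt0.
- by rewrite ler_pdivrMr ?addr_gt0 // ler_pM2l // lerDr ltW.
- by rewrite ler_pdivrMr ?addr_gt0 // [a * b]mulrC ler_pM2l // lerDl ltW.
Qed.

Lemma connected_open_cover (T : topologicalType) (S P Q : set T) : connected S ->
  open P -> open Q -> P `&` Q = set0 -> S `<=` P `|` Q -> S `&` P !=set0 ->
  ~ (S `&` Q !=set0).
Proof.
move=> Sconn oP oQ PQ SPQ [a [Sa Pa]] [b [Sb Qb]].
have SP : S `&` P = S.
  apply: Sconn; [by exists a|by exists P|exists (~` Q); first exact: open_closedC].
  apply/seteqP; split => y [Sy Py]; split => //.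
    by move=> Qy; have : (P `&` Q) y by []; rewrite PQ.
  by have [|//] := SPQ y Sy.
have : (P `&` Q) b by split => //; rewrite -SP in Sb; case: Sb.
by rewrite PQ.
Qed.

Section Topology.
Variables (K : numFieldType) (X : normedModType K).
Implicit Types (P Q S D T : set X).

Local Notation cball := (@closed_ball_ K X Num.norm).

Definition is_convex D :=
  forall y z l, D y -> D z -> 0 <= l -> l <= 1 -> D (y + l *: (z - y)).

Lemma ball_normrP (x y : X) r : ball x r y <-> `|x - y| < r.
Proof. by rewrite -ball_normE. Qed.

Lemma closed_cball x r : closed (cball x r).
Proof.
move=> y cly; apply: contrapT => /negP nle.
have rreal : r \is Num.real.
  have [z [xz _]] := cly _ (nbhsx_ballx y 1 ltr01).
  exact: ger0_real (le_trans (normr_ge0 _) xz).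
have d0 : 0 < `|x - y| - r by rewrite subr_gt0 real_ltNge ?normr_real.
have [z [xz /ball_normrP yz]] := cly _ (nbhsx_ballx y _ d0).
have : `|x - y| < `|x - y|.
  apply: le_lt_trans (ler_distD z x y) _.
  by rewrite -[X in _ < X](subrKC r) ler_ltD // distrC.
by rewrite ltxx.
Qed.

Lemma cball_convex x r : is_convex (cball x r).
Proof.
rewrite /closed_ball_ => y z l /= xy xz l0 l1.
have -> : x - (y + l *: (z - y)) = (1 - l) *: (x - y) + l *: (x - z).
  by rewrite scalerBl scale1r !scalerBr opprD !opprB -!addrA addKr.
apply: le_trans (ler_normD _ _) _; rewrite !normrZ ger0_norm ?subr_ge0 // ger0_norm //.
apply: le_trans (lerD (ler_wpM2l _ xy) (ler_wpM2l l0 xz)) _; first by rewrite subr_ge0.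
by rewrite -mulrDl subrK mul1r.
Qed.

Lemma far_from_closure (A B : set X) : closure A `&` B = set0 ->
  forall b, B b -> exists2 r, 0 < r & forall y, ball b r y -> ~ A y.
Proof.
move=> AB b Bb; have nclb : ~ closure A b.
  by move=> clb; have : (closure A `&` B) b by []; rewrite AB.
have [U bU UA] : exists2 U, nbhs b U & ~ (A `&` U !=set0).
  apply: contrapT => h; apply: nclb => U bU; apply: contrapT => n; apply: h.
  by exists U.
have /nbhs_ballP[r r0 bUr] := bU; exists r => // y bry Ay; apply: UA.
by exists y; split => //; apply: bUr.
Qed.

Lemma separated_open_nbhs (A B : set X) : separated A B ->
  exists P Q, [/\ open P, open Q, P `&` Q = set0, A `<=` P & B `<=` Q].
Proof.
move=> sepAB; have [clAB AclB] := sepAB.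
have notAB y : A y -> B y -> False.
  by move=> Ay By; have : (A `&` B) y by []; rewrite (separated_disjoint sepAB).
have /choice [rad radP] : forall y, exists r : K, 0 < r /\
    (A y -> forall z, ball y r z -> ~ B z) /\ (B y -> forall z, ball y r z -> ~ A z).
  move=> y; have [Ay|nAy] := pselect (A y).
    have [|r r0 rB] := @far_from_closure B A _ y Ay; first by rewrite setIC.
    by exists r; split => //; split => // /(notAB y Ay).
  have [By|nBy] := pselect (B y); last by exists 1; split => //; split.
  have [r r0 rA] := far_from_closure clAB By.
  by exists r; split => //; split => // /nAy.
have rad2 y : 0 < rad y / 2 by rewrite divr_gt0 //; case: (radP y).
exists (\bigcup_(a in A) ball a (rad a / 2)), (\bigcup_(b in B) ball b (rad b / 2)).
split; [exact: bigcup_open (fun _ _ => ball_open _ _)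
       |exact: bigcup_open (fun _ _ => ball_open _ _)| |
       by move=> a Aa; exists a => //; apply: ballxx
      |by move=> b Bb; exists b => //; apply: ballxx].
apply/seteqP; split => // z [[a Aa az] [b Bb bz]].
have [_ [aB _]] := radP a; have [_ [_ bA]] := radP b.
have ab : ball a (rad a / 2 + rad b / 2) b by apply: ball_triangle az (ball_sym bz).
have [ra rb] := (gtr0_real (radP a).1, gtr0_real (radP b).1).
have /orP[le_ab|le_ba] := real_leVge ra rb.
- apply: (bA Bb a _ Aa); apply: ball_sym; apply: le_ball ab.
  by rewrite [X in _ <= X](splitr (rad b)) lerD2r ler_pM2r.
- apply: (aB Aa b _ Bb); apply: le_ball ab.
  by rewrite [X in _ <= X](splitr (rad a)) lerD2l ler_pM2r.
Qed.

Lemma connected_open_separation S :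
  (forall P Q, open P -> open Q -> P `&` Q = set0 -> S `<=` P `|` Q ->
    S `&` P !=set0 -> S `&` Q !=set0 -> False) -> connected S.
Proof.
move=> nosep; apply/connectedP => E [E0 SE sepE].
have [P [Q [oP oQ PQ EP EQ]]] := separated_open_nbhs sepE.
apply: (nosep P Q) => //; first by rewrite SE => x [/EP|/EQ]; [left|right].
- by have [a Ea] := E0 false; exists a; split; [rewrite SE; left|apply: EP].
- by have [b Eb] := E0 true; exists b; split; [rewrite SE; right|apply: EQ].
Qed.

(* Every point of [ball u e] lies in the span of [T] and [v], and a ball spans [X]. *)
Lemma large_ball_segments T u e v : 0 < e ->
  (forall x, ball u e x -> exists2 l, l != 1 & T (x + l *: (v - x))) -> large T.
Proof.
move=> e0 Tseg G TG; exists v.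
set W := lin_span (G `|` [set v]).
have Wv : W v by apply: sub_lin_span; right.
have TW : T `<=` W by move=> t /TG; apply: lin_span_mono => y Gy; left.
have ballW x : ball u e x -> W x.
  move=> /Tseg [l l1 Tx].
  have -> : x = (1 - l)^-1 *: ((x + l *: (v - x)) - l *: v).
    have -> : x + l *: (v - x) - l *: v = (1 - l) *: x.
      by rewrite scalerBr addrCA addrAC subrr add0r scalerBl scale1r.
    by rewrite scalerA mulVf ?scale1r // subr_eq0 eq_sym.
  by apply/lin_spanZ/lin_spanD; [apply: TW|apply/lin_spanN/lin_spanZ].
move=> z; set k := e / (`|z| + e).
have k0 : 0 < k by rewrite divr_gt0 // ltr_wpDl.
have Wu : W u by apply: ballW; apply: ballxx.
have Wuz : W (u + k *: z).
  apply: ballW; apply/ball_normrP; rewrite opprD addrA subrr add0r normrN normrZ.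
  rewrite gtr0_norm // /k mulrAC ltr_pdivrMr ?ltr_wpDl // ltr_pM2l //.
  by rewrite ltrDl.
have -> : z = k^-1 *: ((u + k *: z) - u).
  by rewrite addrAC subrr add0r scalerA mulVf ?scale1r // gt_eqF.
by apply/lin_spanZ/lin_spanD => //; apply: lin_spanN.
Qed.

(* Over a general [numFieldType] the unit interval may be disconnected: this is
   assumed below, and proved for [R] and [R[i]] at the end. *)
Definition segments_connected := forall P Q x b, open P -> open Q ->
  P `&` Q = set0 -> P x -> Q b ->
  exists l : K, [/\ 0 <= l, l <= 1, ~ P (x + l *: (b - x)) & ~ Q (x + l *: (b - x))].

Definition hits_large_closed S := forall C, closed C -> large C -> C `&` S !=set0.

Lemma hits_large_closed_dense S : hits_large_closed S -> dense S.
Proof.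
move=> hits O [y Oy] oO; have /nbhs_ballP[r r0 yO] : nbhs y O by apply: open_nbhs_nbhs.
have r20 : 0 < r / 2 by rewrite divr_gt0.
have [|s [ys Ss]] := hits (cball y (r / 2)) (@closed_cball y _).
  apply: (large_ball_segments (u := y) (e := r / 2) (v := y)) => // x /ball_normrP xy.
  by exists 0; [rewrite eq_sym oner_eq0|rewrite scale0r addr0; apply: ltW].
exists s; split => //; apply: yO; apply/ball_normrP; apply: le_lt_trans ys _.
by rewrite ltr_pdivrMr // ltr_pMr // ltr1n.
Qed.

Section ConnectedSegments.
Hypothesis seg : segments_connected.

Lemma large_gap P Q D a b e : open P -> open Q -> P `&` Q = set0 -> is_convex D ->
  0 < e -> ball a e `<=` D -> P a -> Q b -> D b -> large (D `&` ~` P `&` ~` Q).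
Proof.
move=> oP oQ PQ Dconv e0 aD Pa Qb Db.
have /nbhs_ballP[c c0 aDP] : nbhs a (D `&` P).
  by apply: filterI; [apply/nbhs_ballP; exists e|apply: open_nbhs_nbhs].
apply: (large_ball_segments (u := a) (e := c) (v := b)) => // x /aDP [Dx Px].
have [l [l0 l1 nP nQ]] := seg oP oQ PQ Px Qb.
exists l; last by split; [split|]; [apply: Dconv|..].
by apply: contra_notN nQ => /eqP ->; rewrite scale1r addrC subrK.
Qed.

Lemma hits_large_closed_sep S P Q D a b e : hits_large_closed S ->
  open P -> open Q -> P `&` Q = set0 -> closed D -> is_convex D ->
  0 < e -> ball a e `<=` D -> P a -> Q b -> D b -> ~ (S `&` D `<=` P `|` Q).
Proof.
move=> hits oP oQ PQ cD Dconv e0 aD Pa Qb Db SPQ.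
have [||s [[[Ds nPs] nQs] Ss]] := hits (D `&` ~` P `&` ~` Q).
- by apply: closedI; [apply: closedI => //|]; apply: open_closedC.
- exact: large_gap Dconv e0 aD Pa Qb Db.
by have [] := SPQ s (conj Ss Ds).
Qed.

Lemma hits_large_closed_connected S : hits_large_closed S -> connected S.
Proof.
move=> hits; apply: connected_open_separation => P Q oP oQ PQ SPQ [a [_ Pa]] [b [_ Qb]].
apply: (hits_large_closed_sep (D := setT) (e := 1) hits oP oQ PQ closedT _ ltr01
  _ Pa Qb I) => //; first by move=> x [Sx _]; apply: SPQ.
Qed.

Lemma hits_large_closed_locally_connected S :
  hits_large_closed S -> locally_connected_set S.
Proof.
move=> hits x Sx U oU Ux; have /nbhs_ballP[r r0 xU] : nbhs x U by apply: open_nbhs_nbhs.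
exists (ball x r); split; [exact: ball_open|exact: ballxx|by move=> y [/xU]|].
apply: connected_open_separation => P Q oP oQ PQ SPQ [a [[xa _] Pa]] [b [[xb _] Qb]].
have [c [c0 ca cb]] : exists c, [/\ 0 < c, c <= r - `|x - a| & c <= r - `|x - b|].
  by apply: exists_pos_le2; rewrite subr_gt0; apply/ball_normrP.
have c20 : 0 < c / 2 by rewrite divr_gt0.
have lt_r : r - c / 2 < r by rewrite ltrBlDr ltrDl.
apply: (hits_large_closed_sep (D := cball x (r - c / 2)) (e := c / 2) hits oP oQ PQ
  (@closed_cball x _) (@cball_convex x _) c20 _ Pa Qb).
- move=> z /ball_normrP az; rewrite /closed_ball_ /=.
  apply: le_trans (ler_distD a _ _) _; apply: le_trans (lerD (lexx _) (ltW az)) _.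
  by rewrite lerBrDr -addrA -splitr addrC -lerBrDr.
- rewrite /closed_ball_ /=; apply: (le_trans (y := r - c)).
    by rewrite lerBrDr addrC -lerBrDr.
  by rewrite lerB // ler_pdivrMr // ler_pMr // ler1n.
- move=> y [Sy xy]; apply: SPQ; split => //; apply/ball_normrP.
  exact: le_lt_trans xy lt_r.
Qed.

End ConnectedSegments.
End Topology.

Lemma real_path_segments_connected (R : realType) (K : numFieldType)
    (X : normedModType K) (i : R -> K) :
  continuous i -> i 0 = 0 -> i 1 = 1 ->
  (forall t, 0 <= t <= 1 -> 0 <= i t /\ i t <= 1) -> segments_connected X.
Proof.
move=> ic i0 i1 i01 P Q x b oP oQ PQ Px Qb; apply: contrapT => noseg.
pose g t := x + i t *: (b - x).
have gc : continuous g.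
  move=> t; apply: cvgD; first exact: cvg_cst.
  exact: (@continuousZ _ _ _ i (fun=> b - x) t (ic t) (cvg_cst _)).
have gconn := connected_continuous_connected (@segment_connected R 0 1)
  (continuous_subspaceT gc).
apply: (connected_open_cover gconn oP oQ PQ).
- move=> y [t]; rewrite /= in_itv /= => t01 <-.
  have [Pg|nPg] := pselect (P (g t)); first by left.
  have [Qg|nQg] := pselect (Q (g t)); first by right.
  by have [it0 it1] := i01 t t01; case: noseg; exists (i t); split.
- exists x; split => //; exists 0; last by rewrite /g i0 scale0r addr0.
  by rewrite /= in_itv /= lexx ler01.
- exists b; split => //; exists 1; last by rewrite /g i1 scale1r addrC subrK.
  by rewrite /= in_itv /= lexx ler01.
Qed.

Lemma segments_connected_real (R : realType) (X : normedModType R) :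
  segments_connected X.
Proof.
by apply: (@real_path_segments_connected R R X id) => // [t|t /andP//]; apply: cvg_id.
Qed.

Lemma segments_connected_complex (R : realType) (X : normedModType R[i]) :
  segments_connected X.
Proof.
apply: (@real_path_segments_connected R R[i] X (fun t => (t%:C)%C)) => //; last first.
  by move=> t /andP[t0 t1]; rewrite !lecR.
move=> t; apply/cvgrPdist_lt => e e0.
have Re0 : 0 < complex.Re e by move: e0; rewrite ltcE => /andP[_].
have eE : e = ((complex.Re e)%:C)%C by rewrite RRe_real // gtr0_real.
have /cvgrPdist_lt /(_ _ Re0) : (fun s : R => s) @ t --> t by apply: cvg_id.
apply: filterS => s ts; rewrite eE -rmorphB normc_def /= expr0n addr0 sqrtr_sqr ltcR.
exact: ts.
Qed.

Lemma claim_of_segments_connected (K : numFieldType) :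
  (forall X : normedModType K, segments_connected X) -> theorem2_claim K.
Proof.
move=> seg X infdim opens [E [[/lin_indepP Efree /spansP Espan] EX]].
have /card_eqPle[_ XE] := EX; have /card_eqPle[openX _] := opens.
have [J [lt [code [tr tot codeinj Jcode transv]]]] :=
  exists_fresh_transversal infdim Efree Espan XE.
have [phi _ phiinj] := card_le_fun openT openX.
pose cidx (C : set X) := code (inl (phi (~` C))).
have cidx_inj C C' : closed C -> closed C' -> cidx C = cidx C' -> C = C'.
  move=> cC cC' /codeinj [] /phiinj e; rewrite -(setCK C) -(setCK C') e // inE;
    exact: closed_openC.
pose T j := [set x | forall C, closed C -> large C -> cidx C = j -> C x].
have Tlarge j : J j -> large (T j).
  move=> _; have [[C [cC lC <-]]|none] :=
    pselect (exists C, [/\ closed C, large C & cidx C = j]).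
    by apply: (large_mono _ lC) => x Cx C' cC' _ /(cidx_inj _ _ cC' cC) ->.
  by apply: (large_mono _ (@largeT _ X)) => x _ C cC lC ej; case: none; exists C.
have [q qfresh qT] := transv T Tlarge.
have codeR : injective (code \o inr) by move=> x y /codeinj [].
have [bas [basinj basB basq]] :=
  fresh_signed_bases tr tot qfresh codeR (fun x => Jcode (inr x)).
exists (range bas); split; first exact: inj_card_eq (in2W basinj).
move=> _ [A _ <-]; have [bfree bspan] := basB A.
have hits : hits_large_closed (bas A).
  move=> C cC lC; exists (q (cidx C)); split; first exact: qT (Jcode _) C cC lC erefl.
  by apply: basq (Jcode _) _ => -[x _ /codeinj].
split; first by split; [apply/lin_indepP|apply/spansP].
- exact: hits_large_closed_connected (seg X) _ hits.
- exact: hits_large_closed_locally_connected (seg X) _ hits.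
- exact: hits_large_closed_dense hits.
Qed.

Theorem theorem2 (R : realType) :
  theorem2_claim R /\ theorem2_claim R[i].
Proof.
split; apply: claim_of_segments_connected.
- exact: segments_connected_real.
- exact: segments_connected_complex.
Qed.
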